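(* Let $q$ be a prime power and $n\ge2$. Let $G$ be the group of $(n+1)\times(n+1)$ matrices over $\mathbb{F}_q[t]$ generated by $\{e_{i,i+1}(a+bt):a,b\in\mathbb{F}_q,1\le i\le n\}$, and for $0\le i\le n-1$ let $K_{\{i\}}=\langle e_{j,j+1}(a+bt):j\in\{1,\dots,n\}\setminus\{i+1\},a,b\in\mathbb{F}_q\rangle$. Then the subgroups $K_{\{0\}},\dots,K_{\{n-1\}}$ boundedly generate $G$, and $$\max_{g\in G}\min\{l: g=g_1\cdots g_l,\ g_1,\dots,g_l\in\textstyle\bigcup_iK_{\{i\}}\}\le 2+4(n+1).$$
   Context: $e_{i,j}(r)$ is the $(n+1)\times(n+1)$ matrix with $1$'s on the diagonal, $r$ in entry $(i,j)$ and $0$ elsewhere. Equivalently, $A\in G$ iff $A$ is upper triangular with $1$'s on the diagonal and, for $i<j$, $A(i,j)$ is a polynomial in $t$ over $\mathbb{F}_q$ of degree $\le j-i$. Subgroups boundedly generate $G$ if some fixed $L$ bounds the number of factors from their union needed to write every element of $G$. *)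

From HB Require Import structures.
From mathcomp Require Import all_boot all_order all_algebra.
Set Implicit Arguments. Unset Strict Implicit. Unset Printing Implicit Defensive.
Import GRing.Theory.
Local Open Scope ring_scope.

(* Matrices of size (n+1) x (n+1) over F[t] = {poly F}; indices 0..n
   (the paper's index k corresponds to our index k-1). *)
Notation Mat F n := 'M[{poly F}]_(n.+1).

Definition elem (F : fieldType) (n : nat) (i j : 'I_n.+1) (r : {poly F}) : Mat F n :=
  1%:M + r *: delta_mx i j.

Definition esup (F : fieldType) (n : nat) (j : 'I_n) (r : {poly F}) : Mat F n :=
  elem (widen_ord (leqnSn n) j) (lift ord0 j) r.

Definition lin_poly (F : fieldType) (a b : F) : {poly F} := a%:P + b%:P * 'X.

Definition gens (F : fieldType) (n : nat) (J : pred 'I_n) (A : Mat F n) : Prop :=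
  exists (j : 'I_n) (a b : F), J j /\ A = esup j (lin_poly a b).

Definition gen_letter (F : fieldType) (n : nat) (S : Mat F n -> Prop) (x : Mat F n) : Prop :=
  S x \/ exists y, S y /\ x * y = 1 /\ y * x = 1.

Definition gen_group (F : fieldType) (n : nat) (S : Mat F n -> Prop) (A : Mat F n) : Prop :=
  exists s : seq (Mat F n), (forall x, x \in s -> gen_letter S x) /\ A = \prod_(x <- s) x.

Definition Ggrp (F : fieldType) (n : nat) : Mat F n -> Prop :=
  gen_group (gens (fun _ : 'I_n => true)).

(* K_{i} (paper index i in 0..n-1) = < e_{j,j+1}(a+bt) : j <> i+1 (paper indexing) >;
   in our 0-based indexing of superdiagonal positions, j <> i. *)
Definition Ksub (F : fieldType) (n : nat) (i : 'I_n) : Mat F n -> Prop :=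
  gen_group (gens (fun j : 'I_n => j != i)).

Definition prod_of_K_le (F : fieldType) (n : nat) (L : nat) (g : Mat F n) : Prop :=
  exists s : seq (Mat F n),
    (size s <= L)%N /\ (forall x, x \in s -> exists i : 'I_n, Ksub i x) /\ g = \prod_(x <- s) x.

From HB Require Import structures.
From mathcomp Require Import all_boot all_order all_algebra zify.
Set Implicit Arguments. Unset Strict Implicit. Unset Printing Implicit Defensive.
Import GRing.Theory.
Local Open Scope ring_scope.

(* Every g in G is unitriangular with deg g_ij <= j - i (rows and columns
   indexed 0..n).  Conversely, an entry e_ij(p) with deg p <= j - i lies in
   the group generated by the e_{k,k+1}(a + bt) with i <= k < j: writing
   p = p_0 + t p', it is the product of the commutators [e_{i,i+1}(1),
   e_{i+1,j}(p_0)] and [e_{i,i+1}(t), e_{i+1,j}(p')], and one inducts on j - i.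
   Multiplying out the rows of g from the bottom up gives
   g = A B e_0n(g_0n), where A (rows 1..n) never uses the superdiagonal
   position 0, so lies in K_0, and B (row 0 without its corner) never uses
   position n-1, so lies in K_(n-1).  The same commutator identity writes
   e_0n(g_0n) as eight letters from K_1 and K_0, hence every g is a product of
   10 <= 2 + 4(n+1) elements of the K_i. *)

Lemma prod_1D (R : pzRingType) (m : nat) (X : 'I_m -> R) :
  (forall i j : 'I_m, (i < j)%N -> X i * X j = 0) ->
  \prod_(i < m) (1 + X i) = 1 + \sum_(i < m) X i.
Proof.
elim: m X => [|m IH] X hX; first by rewrite !big_ord0 addr0.
rewrite !big_ord_recl IH; last by move=> i j; exact: (hX (lift ord0 i) (lift ord0 j)).
rewrite mulrDl mul1r mulrDr mulr1 mulr_sumr.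
have -> : \sum_(i < m) X ord0 * X (lift ord0 i) = 0 by rewrite big1 // => i _; apply: hX.
by rewrite addr0 addrAC addrA.
Qed.

Lemma commutator_1D (R : pzRingType) (u v : R) :
  u * u = 0 -> v * v = 0 -> v * u = 0 ->
  (1 + u) * (1 + v) * (1 - u) * (1 - v) = 1 + u * v.
Proof.
move=> uu vv vu; rewrite -(mulrA (1 + u)).
have -> : (1 + v) * (1 - u) = 1 + v - u.
  by rewrite mulrDl mul1r mulrBr mulr1 vu subr0 addrAC.
have -> : (1 + u) * (1 + v - u) = 1 + v + u * v.
  by rewrite mulrDl mul1r mulrBr mulrDr mulr1 uu subr0 addrA addrNK.
rewrite mulrBr mulr1 !mulrDl mul1r vv -mulrA vv mulr0.
by rewrite !addr0 addrAC addrK.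
Qed.

Section Elementary.
Variables (F : fieldType) (n : nat).
Implicit Types (a b c i j : 'I_n.+1) (x y : {poly F}).

Lemma elemE a b x i j : elem a b x i j = (i == j)%:R + x * ((i == a) && (j == b))%:R.
Proof. by rewrite /elem !mxE. Qed.

Lemma elem0 a b : elem a b (0 : {poly F}) = 1.
Proof. by rewrite /elem scale0r addr0. Qed.

Lemma scale_delta_mul a b c i x y :
  (x *: delta_mx a b : Mat F n) * (y *: delta_mx c i) =
  (x * y) *: (if b == c then delta_mx a i else 0).
Proof.
rewrite -scalerAl -scalerAr scalerA -mulmxE.
by case: eqP => [->|/eqP bc]; rewrite ?mul_delta_mx ?mul_delta_mx_0.
Qed.

Lemma elemD a b x y : a != b -> elem a b (x + y) = elem a b x * elem a b y.
Proof.
move=> ab; rewrite /elem mulrDl mul1r mulrDr mulr1 scale_delta_mul eq_sym (negPf ab).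
by rewrite scaler0 addr0 scalerDl addrAC addrA.
Qed.

Lemma elem_mulN a b x : a != b -> elem a b x * elem a b (- x) = 1.
Proof. by move=> ab; rewrite -elemD // subrr elem0. Qed.

Lemma elem_commutator a c b x y : a != c -> c != b -> a != b ->
  elem a b (x * y) = elem a c x * elem c b y * elem a c (- x) * elem c b (- y).
Proof.
move=> ac cb ab; rewrite /elem !scaleNr commutator_1D.
- by rewrite scale_delta_mul eqxx.
- by rewrite scale_delta_mul eq_sym (negPf ac) scaler0.
- by rewrite scale_delta_mul eq_sym (negPf cb) scaler0.
- by rewrite scale_delta_mul eq_sym (negPf ab) scaler0.
Qed.

Lemma elem_commutator_factorization (P : Mat F n -> Prop) a c b (p : {poly F}) d :
  a != c -> c != b -> a != b -> (0 < d)%N -> (size p <= d.+1)%N ->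
  (forall x, (size x <= 2)%N -> P (elem a c x)) ->
  (forall y, (size y <= d)%N -> P (elem c b y)) ->
  exists s, [/\ size s = 8%N, forall z, z \in s -> P z & elem a b p = \prod_(z <- s) z].
Proof.
move=> ac cb ab d_gt0 hp Pac Pcb.
set y0 := take_poly 1 p; set y1 := drop_poly 1 p.
have y0_small : (size y0 <= d)%N by apply: leq_trans (size_take_poly _ _) _.
have y1_small : (size y1 <= d)%N by rewrite size_drop_poly; lia.
exists [:: elem a c 1; elem c b y0; elem a c (-1); elem c b (- y0);
           elem a c 'X; elem c b y1; elem a c (- 'X); elem c b (- y1)]; split=> //; last first.
  rewrite -(poly_take_drop 1 p) -/y0 -/y1 elemD // expr1 mulrC -[y0]mul1r.
  by rewrite !(elem_commutator _ _ ac cb ab) mul1r !big_cons big_nil mulr1 !mulrA.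
move=> z /[!inE]; repeat case/predU1P=> [->|]; last move/eqP->.
all: first [apply: Pac | apply: Pcb]; by rewrite ?size_polyN ?size_poly1 ?size_polyX.
Qed.

End Elementary.

Section GeneratedGroup.
Variables (F : fieldType) (n : nat) (S : Mat F n -> Prop).

Lemma gen_group1 : gen_group S 1.
Proof. by exists [::]; rewrite big_nil. Qed.

Lemma gen_groupM A B : gen_group S A -> gen_group S B -> gen_group S (A * B).
Proof.
move=> [s [hs ->]] [t [ht ->]]; exists (s ++ t); rewrite big_cat; split=> // x.
by rewrite mem_cat => /orP[/hs|/ht].
Qed.

Lemma gen_group_gen A : S A -> gen_group S A.
Proof. by exists [:: A]; rewrite big_seq1; split=> // x /[!inE] /eqP->; left. Qed.

Lemma gen_group_prod (I : eqType) (r : seq I) (f : I -> Mat F n) :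
  (forall i, i \in r -> gen_group S (f i)) -> gen_group S (\prod_(i <- r) f i).
Proof.
elim: r => [|i r IH] hf; first by rewrite big_nil; apply: gen_group1.
rewrite big_cons; apply: gen_groupM; first exact/hf/mem_head.
by apply: IH => j rj; apply: hf; rewrite inE rj orbT.
Qed.

Lemma gen_group_ind (P : Mat F n -> Prop) :
  P 1 -> (forall A B, P A -> P B -> P (A * B)) -> (forall x, gen_letter S x -> P x) ->
  forall A, gen_group S A -> P A.
Proof.
move=> P1 PM Px A [s [hs ->]]; elim: s hs => [|x s IH] hs; first by rewrite big_nil.
rewrite big_cons; apply: PM; first exact/Px/hs/mem_head.
by apply: IH => y sy; apply: hs; rewrite inE sy orbT.
Qed.

End GeneratedGroup.

Lemma size_lin_poly (F : fieldType) (a b : F) : (size (lin_poly a b) <= 2)%N.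
Proof.
rewrite /lin_poly (leq_trans (size_polyD _ _)) // geq_max (leq_trans (size_polyC_leq1 a)) //.
by rewrite (leq_trans (size_polyMleq _ _)) // size_polyX addn2 ltnS size_polyC_leq1.
Qed.

Lemma lin_poly_coef (F : fieldType) (p : {poly F}) :
  (size p <= 2)%N -> lin_poly p`_0 p`_1 = p.
Proof.
move=> hp; apply/polyP => -[|[|i]]; rewrite /lin_poly coefD coefC coefCM coefX /=.
- by rewrite mulr0 addr0.
- by rewrite add0r mulr1.
- by rewrite mulr0 addr0 nth_default //; apply: leq_trans hp _.
Qed.

Section Generation.
Variables (F : fieldType) (n : nat) (J : pred 'I_n).
Implicit Types (a b : 'I_n.+1) (p : {poly F}).

Lemma elem_adjacent_gen a b p : (b : nat) = a.+1 -> (size p <= 2)%N ->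
  (forall k : 'I_n, (a <= k < b)%N -> J k) -> gen_group (gens J) (elem a b p).
Proof.
move=> ba hp hJ; have a_lt_n : (a < n)%N by have := ltn_ord b; lia.
apply: gen_group_gen; exists (Ordinal a_lt_n), p`_0, p`_1; split.
  by apply: hJ => /=; lia.
by rewrite lin_poly_coef //; congr elem; apply: val_inj.
Qed.

Lemma elem_gen a b p : (a < b)%N -> (size p <= b.+1 - a)%N ->
  (forall k : 'I_n, (a <= k < b)%N -> J k) -> gen_group (gens J) (elem a b p).
Proof.
move eq_d : (b - a.+1)%N => d; elim: d a b eq_d p => [|d IH] a b eq_d p ab hp hJ.
  by apply: elem_adjacent_gen => //; lia.
have c_lt : (a.+1 < n.+1)%N by have := ltn_ord b; lia.
pose c := Ordinal c_lt.
have neq_ac : a != c by rewrite -val_eqE /=; lia.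
have neq_cb : c != b by rewrite -val_eqE /=; lia.
have neq_ab : a != b by rewrite -val_eqE /=; lia.
have gen_ac (x : {poly F}) : (size x <= 2)%N -> gen_group (gens J) (elem a c x).
  by move=> hx; apply: elem_adjacent_gen => // k /= hk; apply: hJ; lia.
have gen_cb (y : {poly F}) : (size y <= b - a)%N -> gen_group (gens J) (elem c b y).
  by move=> hy; apply: IH => /= [||//|k hk]; [lia | lia | apply: hJ; lia].
have d_gt0 : (0 < b - a)%N by lia.
have hp' : (size p <= (b - a).+1)%N by lia.
have [s [_ hs ->]] :=
  elem_commutator_factorization neq_ac neq_cb neq_ab d_gt0 hp' gen_ac gen_cb.
exact: gen_group_prod.
Qed.

End Generation.

Section UnitriangularShape.
Variables (F : fieldType) (n : nat).
Implicit Types (M : Mat F n) (a b i j : 'I_n.+1).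

(* As [j.+1 - i] is truncated, the entries below the diagonal must vanish. *)
Definition deg_unitri M :=
  (forall i, M i i = 1) /\ (forall i j, (size (M i j) <= j.+1 - i)%N).

Lemma deg_unitri_lower M i j : deg_unitri M -> (j < i)%N -> M i j = 0.
Proof.
move=> [_ hM] ji; apply/eqP; rewrite -size_poly_leq0.
by apply: leq_trans (hM i j) _; lia.
Qed.

Lemma size_kronecker i j : (size ((i == j)%:R : {poly F}) <= j.+1 - i)%N.
Proof. by case: eqP => [->|_]; rewrite ?size_poly1 ?size_poly0 //; lia. Qed.

Lemma deg_unitri1 : deg_unitri 1.
Proof. by split=> [i|i j]; rewrite !mxE ?eqxx // size_kronecker. Qed.

Lemma deg_unitri_elem a b (x : {poly F}) :
  (a < b)%N -> (size x <= b.+1 - a)%N -> deg_unitri (elem a b x).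
Proof.
move=> ab hx; have neq_ab : a != b by rewrite -val_eqE /=; lia.
split=> [i|i j]; rewrite elemE.
  by case: (i =P a) => [->|_]; rewrite ?(negPf neq_ab) eqxx mulr0 addr0.
case: (i =P a) => [->|_]; case: (j =P b) => [->|_]; rewrite ?mulr0 ?addr0 ?size_kronecker //.
by rewrite (negPf neq_ab) add0r mulr1.
Qed.

Lemma deg_unitri_mul M N : deg_unitri M -> deg_unitri N -> deg_unitri (M * N).
Proof.
move=> hM hN; split=> [i|i j]; rewrite -mulmxE mxE.
  rewrite (bigD1 i) //= hM.1 hN.1 mulr1 big1 ?addr0 // => k /negPf ki.
  case: (ltngtP k i) => [lt|gt|/val_inj eq]; last by rewrite eq eqxx in ki.
    by rewrite (deg_unitri_lower hM lt) mul0r.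
  by rewrite (deg_unitri_lower hN gt) mulr0.
apply: leq_trans (size_sum _ _ _) _; apply/bigmax_leqP => k _.
have [->|nzM] := eqVneq (M i k) 0; first by rewrite mul0r size_poly0.
have [->|nzN] := eqVneq (N k j) 0; first by rewrite mulr0 size_poly0.
apply: leq_trans (size_polyMleq _ _) _.
move: (hM.2 i k) (hN.2 k j); rewrite -size_poly_gt0 in nzM; rewrite -size_poly_gt0 in nzN.
move: (size (M i k)) (size (N k j)) nzM nzN (i : nat) (j : nat) (k : nat) => *; lia.
Qed.

Lemma Ggrp_deg_unitri (g : Mat F n) : Ggrp g -> deg_unitri g.
Proof.
have esup_deg k (x : {poly F}) : (size x <= 2)%N -> deg_unitri (esup k x).
  move=> hx; apply: deg_unitri_elem; rewrite /= /bump leq0n add1n //.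
  by apply: leq_trans hx _; lia.
apply: (gen_group_ind (P := deg_unitri)); [exact: deg_unitri1 | exact: deg_unitri_mul |].
move=> x [[k [a [b [_ ->]]]] | [y [[k [a [b [_ ->]]]] [xy _]]]].
  exact/esup_deg/size_lin_poly.
have neq : widen_ord (leqnSn n) k != lift ord0 k.
  by rewrite -val_eqE /= /bump leq0n add1n; lia.
have -> : x = esup k (- lin_poly a b).
  by rewrite -[x]mulr1 -(elem_mulN (lin_poly a b) neq) mulrA xy mul1r.
by apply: esup_deg; rewrite size_polyN size_lin_poly.
Qed.

End UnitriangularShape.

Section RowFactorization.
Variables (F : fieldType) (n : nat).
Implicit Types (M : Mat F n) (a b : 'I_n.+1).

Definition upper M a b : {poly F} := if (a < b)%N then M a b else 0.

Definition row_factor M a : Mat F n := \prod_(b < n.+1) elem a b (upper M a b).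

Lemma row_factorE M a :
  row_factor M a = 1 + \sum_(b < n.+1) upper M a b *: delta_mx a b.
Proof.
rewrite /row_factor /elem prod_1D // => b b' _; rewrite scale_delta_mul /upper.
case: ltnP => [ab|_]; last by rewrite mul0r scale0r.
by rewrite -val_eqE (gtn_eqF ab) scaler0.
Qed.

Lemma prod_row_factor M : deg_unitri M -> \prod_(k < n.+1) row_factor M (rev_ord k) = M.
Proof.
(* Multiplying the row factors bottom-up makes all cross terms vanish. *)
move=> hM; pose R a : Mat F n := \sum_(b < n.+1) upper M a b *: delta_mx a b.
rewrite (eq_bigr (fun k => 1 + R (rev_ord k))) => [|k _]; last exact: row_factorE.
rewrite prod_1D => [|k k' kk']; last first.
  rewrite mulr_suml big1 // => b _; rewrite mulr_sumr big1 // => b' _.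
  rewrite scale_delta_mul /upper; case: ltnP => [lt|_]; last by rewrite mul0r scale0r.
  have lt' : (rev_ord k' < b)%N by move: lt kk'; rewrite /=; lia.
  by rewrite -val_eqE (gtn_eqF lt') scaler0.
have -> : \sum_(k < n.+1) R (rev_ord k) = \matrix_(i, j) upper M i j.
  rewrite (reindex_inj rev_ord_inj) /= [RHS]matrix_sum_delta.
  by apply: eq_bigr => a _; rewrite rev_ordK; apply: eq_bigr => b _; rewrite mxE.
apply/matrixP => i j; rewrite !mxE /upper.
case: ltngtP => [ij|ji|/val_inj ->]; last by rewrite eqxx hM.1 addr0.
  by rewrite -val_eqE (ltn_eqF ij) add0r.
by rewrite -val_eqE (gtn_eqF ji) addr0 (deg_unitri_lower hM ji).
Qed.

Lemma elem_upper_gen (J : pred 'I_n) M a b : deg_unitri M ->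
  (forall k : 'I_n, (a <= k < b)%N -> J k) -> gen_group (gens J) (elem a b (upper M a b)).
Proof.
move=> hM hJ; rewrite /upper; case: ltnP => ab; last by rewrite elem0; apply: gen_group1.
exact: elem_gen (hM.2 a b) hJ.
Qed.

End RowFactorization.

Lemma deg_unitri_row0_split (F : fieldType) (n : nat) (M : Mat F n.+1) : deg_unitri M ->
  exists A B, [/\ Ksub ord0 A, Ksub ord_max B & M = A * B * elem ord0 ord_max (M ord0 ord_max)].
Proof.
move=> hM; have := prod_row_factor hM; rewrite big_ord_recr /=.
have -> : rev_ord ord_max = ord0 :> 'I_n.+2 by apply: val_inj => /=; rewrite subnn.
rewrite [row_factor M ord0]big_ord_recr mulrA => defM.
eexists; eexists; split; last exact: esym defM.
  apply: gen_group_prod => k _; apply: gen_group_prod => b _.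
  by apply: elem_upper_gen => // j /= hj; rewrite -val_eqE /=; move: (ltn_ord k); lia.
apply: gen_group_prod => b _.
by apply: elem_upper_gen => // j /= hj; rewrite -val_eqE /=; move: (ltn_ord b); lia.
Qed.

Lemma corner_elem_factorization (F : fieldType) (m : nat) (p : {poly F}) :
  (size p <= m.+3)%N ->
  exists s : seq (Mat F m.+2), [/\ size s = 8%N, forall z, z \in s -> exists i, Ksub i z
    & elem ord0 ord_max p = \prod_(z <- s) z].
Proof.
move=> hp; apply: (@elem_commutator_factorization _ _ _ _ (lift ord0 ord0) _ _ m.+2) => //.
- move=> x hx; exists (lift ord0 ord0); apply: elem_adjacent_gen => // k /= hk.
  by rewrite -val_eqE /=; lia.
- move=> y hy; exists ord0; apply: elem_gen => // k /= hk.
  by rewrite -val_eqE /=; move: hk; rewrite /bump /=; lia.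
Qed.

Local Close Scope ring_scope.

Theorem lemma7p9 (F : finFieldType) (n : nat) (hn : (2 <= n)%N) :
  (exists L : nat, forall g : Mat F n, Ggrp g -> prod_of_K_le L g) /\
  (forall g : Mat F n, Ggrp g -> prod_of_K_le (2 + 4 * n.+1) g).
Proof.
suff bound : forall g : Mat F n, Ggrp g -> prod_of_K_le (2 + 4 * n.+1) g.
  by split=> //; exists (2 + 4 * n.+1).
case: n hn => [|[|m]] // _ g /Ggrp_deg_unitri hg.
have [A [B [KA KB ->]]] := deg_unitri_row0_split hg.
have [s [s8 Ks ->]] := corner_elem_factorization (hg.2 ord0 ord_max).
exists [:: A, B & s]; split; [|split].
- by rewrite /= s8; lia.
- by move=> x /[!inE] /predU1P[->|/predU1P[->|/Ks//]]; [exists ord0 | exists ord_max].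
- by rewrite !big_cons !mulrA.
Qed.
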